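(* In the category $\mathcal H'$ described in the context, for every integer $k\ge1$ the following equality holds in $\mathrm{End}_{\mathcal H'}(\mathbf 1)$: \[\tilde c_{k+1}=\sum_{a=0}^{k-1}\tilde c_a\, c_{k-1-a}.\]
   Context: Let $\Bbbk$ be a commutative ring. The category $\mathcal{H}'$ is the $\Bbbk$-linear additive strict monoidal category defined as follows. For a finite sign sequence $\epsilon=\epsilon_1\cdots\epsilon_m$ there is an object $Q_\epsilon=Q_{\epsilon_1}\otimes\cdots\otimes Q_{\epsilon_m}$, $Q_\epsilon\otimes Q_{\epsilon'}=Q_{\epsilon\epsilon'}$, unit $\mathbf 1=Q_\emptyset$; general objects are finite formal direct sums. $\mathrm{Hom}(Q_\epsilon,Q_{\epsilon'})$ ($\epsilon$ of length $m$, $\epsilon'$ of length $k$) is the $\Bbbk$-module spanned by planar diagrams: compact oriented $1$-manifolds immersed in $\mathbb R\times[0,1]$ with only transverse double points, boundary $\{1,\dots,m\}\times\{0\}\cup\{1,\dots,k\}\times\{1\}$, the strand pointing upward at the $i$-th lower (resp. $j$-th upper) endpoint iff $\epsilon_i=+$ (resp. $\epsilon'_j=+$); up to isotopy rel boundary and modulo local relations. Composition is stacking, $\otimes$ is juxtaposition. With $X\in\mathrm{End}(Q_{++})$ the crossing of two upward strands, $\mathrm{cup}_{+-}:\mathbf 1\to Q_{+-}$, $\mathrm{cup}_{-+}:\mathbf 1\to Q_{-+}$, $\mathrm{cap}_{+-}:Q_{+-}\to\mathbf 1$, $\mathrm{cap}_{-+}:Q_{-+}\to\mathbf 1$ the oriented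 U-turns, and $Y:Q_{+-}\to Q_{-+}$, $Y':Q_{-+}\to Q_{+-}$ the mixed crossings, the relations are: $X^2=\mathrm{id}$; braid relation for $X$ on $Q_{+++}$; $Y'Y=\mathrm{id}_{Q_{+-}}$; $YY'=\mathrm{id}_{Q_{-+}}-\mathrm{cup}_{-+}\mathrm{cap}_{-+}$; $\mathrm{cap}_{-+}\mathrm{cup}_{-+}=\mathrm{id}_{\mathbf 1}$; $(\mathrm{cap}_{-+}\otimes\mathrm{id}_{Q_+})(\mathrm{id}_{Q_-}\otimes X)(\mathrm{cup}_{-+}\otimes\mathrm{id}_{Q_+})=0$ (left curl is zero). The dot (right curl) is $x=(\mathrm{id}_{Q_+}\otimes\mathrm{cap}_{+-})(X\otimes\mathrm{id}_{Q_-})(\mathrm{id}_{Q_+}\otimes\mathrm{cup}_{+-})\in\mathrm{End}(Q_+)$. The clockwise circle with $k$ dots is $c_k=\mathrm{cap}_{+-}\circ(x^k\otimes\mathrm{id}_{Q_-})\circ\mathrm{cup}_{+-}$ and the counterclockwise circle with $k$ dots is $\tilde c_k=\mathrm{cap}_{-+}\circ(\mathrm{id}_{Q_-}\otimes x^k)\circ\mathrm{cup}_{-+}$, both in the commutative algebra $\mathrm{End}_{\mathcal H'}(\mathbf 1)$, whose product is composition. *)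

(* The category H' is built as a presentation:
   morphisms are (untyped) formal terms, with a computable typing function,
   modulo the smallest equivalence relation containing the strict monoidal
   k-linear category axioms, the planar-isotopy relations and the local
   relations of H'.  Signs: true = +, false = -. *)
From HB Require Import structures.
From mathcomp Require Import all_boot all_order all_algebra.
Set Implicit Arguments. Unset Strict Implicit. Unset Printing Implicit Defensive.
Import GRing.Theory.
Local Open Scope ring_scope.

Inductive gen :=
| GX
| GCupPM
| GCupMP
| GCapPM
| GCapMP
| GY
| GY'.

Definition gsrc (g : gen) : seq bool :=
  match g with
  | GX => [:: true; true] | GCupPM => [::] | GCupMP => [::]
  | GCapPM => [:: true; false] | GCapMP => [:: false; true]
  | GY => [:: true; false] | GY' => [:: false; true]
  end.
Definition gtgt (g : gen) : seq bool :=
  match g with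
  | GX => [:: true; true] | GCupPM => [:: true; false] | GCupMP => [:: false; true]
  | GCapPM => [::] | GCapMP => [::]
  | GY => [:: false; true] | GY' => [:: true; false]
  end.

Section Terms.
Variable R : comPzRingType.

(* formal expressions for morphisms; Comp s t means s o t (t first) *)
Inductive term :=
| Id (e : seq bool)
| Gen (g : gen)
| Comp (s t : term)
| Tens (s t : term)
| Zero (e f : seq bool)
| Add (s t : term)
| Scale (a : R) (s : term).

Fixpoint ty (t : term) : option (seq bool * seq bool) :=
  match t with
  | Id e => Some (e, e)
  | Gen g => Some (gsrc g, gtgt g)
  | Comp s u =>
      match ty s, ty u with
      | Some (b, c), Some (a, b') => if b == b' then Some (a, c) else None
      | _, _ => None
      end
  | Tens s u =>
      match ty s, ty u with
      | Some (a1, b1), Some (a2, b2) => Some (a1 ++ a2, b1 ++ b2)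
      | _, _ => None
      end
  | Zero e f => Some (e, f)
  | Add s u => if ty s == ty u then ty s else None
  | Scale _ s => ty s
  end.

Notation X := (Gen GX).
Notation cupPM := (Gen GCupPM).
Notation cupMP := (Gen GCupMP).
Notation capPM := (Gen GCapPM).
Notation capMP := (Gen GCapMP).
Notation Y := (Gen GY).
Notation Y' := (Gen GY').
Notation p := true.
Notation m := false.

(* basic equations; they are imposed only when both sides are well typed
   with the same type (see heq_ax) *)
Inductive ax : term -> term -> Prop :=
| ax_idl s b : ax (Comp (Id b) s) s
| ax_idr s a : ax (Comp s (Id a)) s
| ax_compA s t u : ax (Comp (Comp s t) u) (Comp s (Comp t u))
| ax_tensA s t u : ax (Tens (Tens s t) u) (Tens s (Tens t u))
| ax_tens1l s : ax (Tens (Id [::]) s) s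
| ax_tens1r s : ax (Tens s (Id [::])) s
| ax_tensId e1 e2 : ax (Tens (Id e1) (Id e2)) (Id (e1 ++ e2))
| ax_interchange s t u v :
    ax (Comp (Tens s t) (Tens u v)) (Tens (Comp s u) (Comp t v))
| ax_addA s t u : ax (Add (Add s t) u) (Add s (Add t u))
| ax_addC s t : ax (Add s t) (Add t s)
| ax_add0 e f s : ax (Add (Zero e f) s) s
| ax_scale0 e f s : ax (Scale 0 s) (Zero e f)
| ax_scale1 s : ax (Scale 1 s) s
| ax_scaleM a b s : ax (Scale (a * b) s) (Scale a (Scale b s))
| ax_scaleDl a b s : ax (Scale (a + b) s) (Add (Scale a s) (Scale b s))
| ax_scaleDr a s t : ax (Scale a (Add s t)) (Add (Scale a s) (Scale a t))
| ax_compDl s t u : ax (Comp (Add s t) u) (Add (Comp s u) (Comp t u))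
| ax_compDr s t u : ax (Comp u (Add s t)) (Add (Comp u s) (Comp u t))
| ax_compZl a s t : ax (Comp (Scale a s) t) (Scale a (Comp s t))
| ax_compZr a s t : ax (Comp s (Scale a t)) (Scale a (Comp s t))
| ax_comp0l b c a t : ax (Comp (Zero b c) t) (Zero a c)
| ax_comp0r a b c s : ax (Comp s (Zero a b)) (Zero a c)
| ax_tensDl s t u : ax (Tens (Add s t) u) (Add (Tens s u) (Tens t u))
| ax_tensDr s t u : ax (Tens u (Add s t)) (Add (Tens u s) (Tens u t))
| ax_tensZl a s t : ax (Tens (Scale a s) t) (Scale a (Tens s t))
| ax_tensZr a s t : ax (Tens s (Scale a t)) (Scale a (Tens s t))
| ax_tens0l e f e' f' t : ax (Tens (Zero e f) t) (Zero e' f')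
| ax_tens0r e f e' f' s : ax (Tens s (Zero e f)) (Zero e' f')
| ax_zz1 : ax (Comp (Tens (Id [:: p]) capMP) (Tens cupPM (Id [:: p]))) (Id [:: p])
| ax_zz2 : ax (Comp (Tens capPM (Id [:: p])) (Tens (Id [:: p]) cupMP)) (Id [:: p])
| ax_zz3 : ax (Comp (Tens (Id [:: m]) capPM) (Tens cupMP (Id [:: m]))) (Id [:: m])
| ax_zz4 : ax (Comp (Tens capMP (Id [:: m])) (Tens (Id [:: m]) cupPM)) (Id [:: m])
(* planar isotopy: Y is X rotated clockwise, Y' is X rotated counterclockwise *)
| ax_Yrot : ax Y
    (Comp (Tens (Id [:: m; p]) capPM)
      (Comp (Tens (Id [:: m]) (Tens X (Id [:: m])))
            (Tens cupMP (Id [:: p; m]))))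
| ax_Y'rot : ax Y'
    (Comp (Tens capMP (Id [:: p; m]))
      (Comp (Tens (Id [:: m]) (Tens X (Id [:: m])))
            (Tens (Id [:: m; p]) cupPM)))
(* planar isotopy: cyclicity (the downward crossing is well defined) *)
| ax_cyclic :
    ax (Comp (Tens (Id [:: m; m]) capPM)
         (Comp (Tens (Id [:: m]) (Tens Y (Id [:: m])))
               (Tens cupMP (Id [:: m; m]))))
       (Comp (Tens capMP (Id [:: m; m]))
         (Comp (Tens (Id [:: m]) (Tens Y' (Id [:: m])))
               (Tens (Id [:: m; m]) cupPM)))
| ax_X2 : ax (Comp X X) (Id [:: p; p])
| ax_braid :
    ax (Comp (Tens X (Id [:: p])) (Comp (Tens (Id [:: p]) X) (Tens X (Id [:: p]))))
       (Comp (Tens (Id [:: p]) X) (Comp (Tens X (Id [:: p])) (Tens (Id [:: p]) X)))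
| ax_Y'Y : ax (Comp Y' Y) (Id [:: p; m])
| ax_YY' : ax (Comp Y Y') (Add (Id [:: m; p]) (Scale (-1) (Comp cupMP capMP)))
| ax_bubble : ax (Comp capMP cupMP) (Id [::])
| ax_leftcurl :
    ax (Comp (Tens capMP (Id [:: p])) (Comp (Tens (Id [:: m]) X) (Tens cupMP (Id [:: p]))))
       (Zero [:: p] [:: p]).

Inductive heq : term -> term -> Prop :=
| heq_ax s t : ax s t -> ty s = ty t -> ty s <> None -> heq s t
| heq_refl s : ty s <> None -> heq s s
| heq_sym s t : heq s t -> heq t s
| heq_trans s t u : heq s t -> heq t u -> heq s u
| heq_comp s s' t t' : heq s s' -> heq t t' -> heq (Comp s t) (Comp s' t')
| heq_tens s s' t t' : heq s s' -> heq t t' -> heq (Tens s t) (Tens s' t')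
| heq_add s s' t t' : heq s s' -> heq t t' -> heq (Add s t) (Add s' t')
| heq_scale a s s' : heq s s' -> heq (Scale a s) (Scale a s').

(* the dot (right curl) x in End(Q_+) *)
Definition dot : term :=
  Comp (Tens (Id [:: p]) capPM) (Comp (Tens X (Id [:: m])) (Tens (Id [:: p]) cupPM)).

Fixpoint dotpow (k : nat) : term :=
  match k with 0 => Id [:: p] | k'.+1 => Comp dot (dotpow k') end.

(* clockwise circle with k dots *)

Definition c_ (k : nat) : term :=
  Comp capPM (Comp (Tens (dotpow k) (Id [:: m])) cupPM).

(* counterclockwise circle with k dots *)
Definition ct_ (k : nat) : term :=
  Comp capMP (Comp (Tens (Id [:: m]) (dotpow k)) cupMP).

Definition sum1 (s : seq term) : term := foldr Add (Zero [::] [::]) s.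

End Terms.

(* Write [E j k] ([close_up (crossing (dotpow R j) (dotpow R k))] below) for the diagram
   obtained from the upward crossing carrying [j] dots on its upper right end and [k] dots on
   its lower left end by closing the right strand clockwise and the left one counterclockwise.
   Since the dot is a right curl, the counterclockwise circle with [k+1] dots is [E 0 k].
   Sliding a dot through the crossing, X (x ⊗ 1) = (1 ⊗ x) X + 1, gives
   [E j (k+1) = ct_k c_j + E (j+1) k], and [E j 0 = 0] because it contains a left curl;
   unrolling the recursion gives [E 0 k = Σ_{a<k} ct_a c_{k-1-a}].

   Equalities of diagrams are derived by writing a morphism as a composite of layers
   [1_a ⊗ g ⊗ 1_b], [g] a generator, and rewriting contiguous blocks of layers with whiskered
   forms of the relations. *)

From Pilot Require Import Defs.
From mathcomp Require Import all_boot all_order all_algebra.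
From mathcomp Require Import zify.
Set Implicit Arguments. Unset Strict Implicit. Unset Printing Implicit Defensive.

Notation Pp := true.
Notation Mm := false.

Definition ty_comp (o1 o2 : option (seq bool * seq bool)) :=
  match o1, o2 with
  | Some (b, c), Some (a, b') => if b == b' then Some (a, c) else None
  | _, _ => None
  end.

Lemma ty_compA o1 o2 o3 : ty_comp (ty_comp o1 o2) o3 = ty_comp o1 (ty_comp o2 o3).
Proof.
case: o1 => [[b c]|]; case: o2 => [[a b']|]; case: o3 => [[z a']|] => //=.
- by case E: (b == b') => //=; case: (a == a') => //=; rewrite E.
- by case: (b == b').
Qed.

Lemma ty_comp_typed o1 o2 : ty_comp o1 o2 <> None -> o1 <> None /\ o2 <> None.
Proof. by case: o1 => [[]|]; case: o2 => [[]|]. Qed.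

Section Presentation.
Variable R : comPzRingType.
Implicit Types s t u v A B L : term R.

Notation X := (Gen R GX).
Notation cupPM := (Gen R GCupPM).
Notation cupMP := (Gen R GCupMP).
Notation capPM := (Gen R GCapPM).
Notation capMP := (Gen R GCapMP).
Notation Y := (Gen R GY).
Notation Y' := (Gen R GY').
Notation Id := (Id R).
Notation Zero := (Zero R).

Lemma ty_Comp s t : ty (Comp s t) = ty_comp (ty s) (ty t).
Proof. by []. Qed.

Lemma Comp_typed s t : ty (Comp s t) <> None -> ty s <> None /\ ty t <> None.
Proof. exact: ty_comp_typed. Qed.

Lemma typedP t : ty t <> None -> exists x y, ty t = Some (x, y).
Proof. case: (ty t) => [[x y]|] // _; by exists x, y. Qed.

Lemma Comp_typedP s t : ty (Comp s t) <> None ->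
  exists x y z, ty s = Some (y, z) /\ ty t = Some (x, y).
Proof.
rewrite ty_Comp; case: (ty s) => [[b c]|] //; case: (ty t) => [[a b']|] //=.
case: eqP => // <- _; by exists a, b, c.
Qed.

Lemma heq_ty s t : heq s t -> ty s = ty t.
Proof.
elim=> {s t} // [s t u _ -> _ -> //|s s' t t' _ hs _ ht|s s' t t' _ hs _ ht|
  s s' t t' _ hs _ ht]; by rewrite /= hs ht.
Qed.

Lemma heq_id e : heq (Id e) (Id e).
Proof. exact: heq_refl. Qed.

Ltac typecheck :=
  repeat progress (simpl; repeat (match goal with
    H : ty ?t = Some _ |- context [ty ?t] => rewrite H end));
  rewrite ?cats0 ?cat0s ?catA ?eqxx ?catA //.

Ltac by_axiom L := apply: heq_ax; [exact: L | typecheck | typecheck].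

Lemma heq_idl s a b : ty s = Some (a, b) -> heq (Comp (Id b) s) s.
Proof. move=> hs; by_axiom ax_idl. Qed.

Lemma heq_idr s a b : ty s = Some (a, b) -> heq (Comp s (Id a)) s.
Proof. move=> hs; by_axiom ax_idr. Qed.

Lemma heq_compA s t u :
  ty (Comp s (Comp t u)) <> None -> heq (Comp (Comp s t) u) (Comp s (Comp t u)).
Proof.
move=> h; apply: heq_ax; [exact: ax_compA | by rewrite !ty_Comp ty_compA..].
Qed.

Lemma heq_tensA s t u a b c d e f :
  ty s = Some (a, b) -> ty t = Some (c, d) -> ty u = Some (e, f) ->
  heq (Tens (Tens s t) u) (Tens s (Tens t u)).
Proof. move=> hs ht hu; by_axiom ax_tensA. Qed.

Lemma heq_tens1l s a b : ty s = Some (a, b) -> heq (Tens (Id [::]) s) s.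
Proof. move=> hs; by_axiom ax_tens1l. Qed.

Lemma heq_tens1r s a b : ty s = Some (a, b) -> heq (Tens s (Id [::])) s.
Proof. move=> hs; apply: heq_ax; [exact: ax_tens1r | typecheck; by rewrite !cats0 | typecheck]. Qed.

Lemma heq_tensId e1 e2 : heq (Tens (Id e1) (Id e2)) (Id (e1 ++ e2)).
Proof. by_axiom ax_tensId. Qed.

Lemma heq_interchange s t u v a b c d e f :
  ty s = Some (b, c) -> ty u = Some (a, b) -> ty t = Some (e, f) -> ty v = Some (d, e) ->
  heq (Comp (Tens s t) (Tens u v)) (Tens (Comp s u) (Comp t v)).
Proof. move=> hs hu ht hv; by_axiom ax_interchange. Qed.

Lemma heq_tens_comp s t a b c d : ty s = Some (a, b) -> ty t = Some (c, d) ->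
  heq (Tens s t) (Comp (Tens s (Id d)) (Tens (Id a) t)).
Proof.
move=> hs ht; apply: heq_sym.
apply: heq_trans.
  exact: heq_interchange hs (erefl : ty (Id a) = _) (erefl : ty (Id d) = _) ht.
apply: heq_tens; [exact: heq_idr hs | exact: heq_idl ht].
Qed.

Definition whisker a t b := Tens (Id a) (Tens t (Id b)).
Arguments whisker : simpl never.

Lemma whisker_cong a b s s' : heq s s' -> heq (whisker a s b) (whisker a s' b).
Proof. move=> h; apply: heq_tens; first exact: heq_id. by apply: heq_tens => //; exact: heq_id. Qed.

Lemma whisker_comp a b (f g : term R) x y z :
  ty f = Some (y, z) -> ty g = Some (x, y) ->
  heq (Comp (whisker a f b) (whisker a g b)) (whisker a (Comp f g) b).
Proof.
move=> hf hg; rewrite /whisker.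
apply: heq_trans; first (apply: heq_interchange; typecheck).
apply: heq_tens; first exact: heq_idl (erefl : ty (Id a) = _).
apply: heq_trans; first (apply: heq_interchange; typecheck).
by apply: heq_tens; [apply: heq_refl; typecheck | apply: heq_idl].
Qed.

Lemma whisker_id a b e : heq (whisker a (Id e) b) (Id (a ++ e ++ b)).
Proof.
apply: heq_trans; first exact: heq_tens (heq_id a) (heq_tensId e b).
exact: heq_tensId.
Qed.

Lemma whisker0 t x y : ty t = Some (x, y) -> heq (whisker [::] t [::]) t.
Proof.
move=> ht; apply: heq_trans; first (apply: heq_tens1l; typecheck).
exact: heq_tens1r ht.
Qed.

Lemma whiskerl a t x y : ty t = Some (x, y) -> heq (Tens (Id a) t) (whisker a t [::]).
Proof. move=> ht; apply: heq_tens; first exact: heq_id. exact: heq_sym (heq_tens1r ht). Qed.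

Lemma whiskerr b t x y : ty t = Some (x, y) -> heq (Tens t (Id b)) (whisker [::] t b).
Proof. move=> ht; apply: heq_sym; apply: heq_tens1l; typecheck. Qed.

Lemma heq_tensIdl e1 e2 t x y : ty t = Some (x, y) ->
  heq (Tens (Id e1) (Tens (Id e2) t)) (Tens (Id (e1 ++ e2)) t).
Proof.
move=> ht; apply: heq_trans.
  exact: heq_sym (heq_tensA (s := Id e1) (t := Id e2) erefl erefl ht).
by apply: heq_tens; [exact: heq_tensId | apply: heq_refl; rewrite ht].
Qed.

Lemma heq_tensIdr e1 e2 t x y : ty t = Some (x, y) ->
  heq (Tens (Tens t (Id e1)) (Id e2)) (Tens t (Id (e1 ++ e2))).
Proof.
move=> ht; apply: heq_trans; first exact: (heq_tensA (t := Id e1) (u := Id e2) ht erefl erefl).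
by apply: heq_tens; [apply: heq_refl; rewrite ht | exact: heq_tensId].
Qed.

Lemma whisker_whisker a b a' b' t x y : ty t = Some (x, y) ->
  heq (whisker a (whisker a' t b') b) (whisker (a ++ a') t (b' ++ b)).
Proof.
move=> ht; rewrite /whisker.
apply: heq_trans; first by apply: heq_tens; [exact: heq_id | apply: heq_tensA; typecheck].
apply: heq_trans; first (apply: heq_tensIdl; typecheck).
by apply: heq_tens; [exact: heq_id | apply: heq_tensIdr; typecheck].
Qed.

Lemma whisker_tensIdr a b e t x y : ty t = Some (x, y) ->
  heq (whisker a (Tens t (Id e)) b) (whisker a t (e ++ b)).
Proof. move=> ht; apply: heq_tens; first exact: heq_id. by apply: heq_tensIdr; typecheck. Qed.

Lemma whisker_Idtens a b e1 e2 t x y : ty t = Some (x, y) ->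
  heq (whisker a (Tens (Id e1) (Tens (Id e2) t)) b) (whisker (a ++ e1 ++ e2) t b).
Proof.
move=> ht; rewrite /whisker.
apply: heq_trans; first by apply: heq_tens; [exact: heq_id | apply: heq_tensA; typecheck].
apply: heq_trans.
  apply: heq_tens; first exact: heq_id.
  by apply: heq_tens; [exact: heq_id | apply: heq_tensA; typecheck].
apply: heq_trans; first by apply: heq_tens; [exact: heq_id | apply: heq_tensIdl; typecheck].
by apply: heq_tensIdl; typecheck.
Qed.

Lemma whisker_add a b A B x y : ty A = Some (x, y) -> ty B = Some (x, y) ->
  heq (whisker a (Add A B) b) (Add (whisker a A b) (whisker a B b)).
Proof.
move=> hA hB; rewrite /whisker.
apply: heq_trans; first by apply: heq_tens; [exact: heq_id | by_axiom ax_tensDl].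
by_axiom ax_tensDr.
Qed.

Lemma heq_tens_exchange (f g : term R) x x' y y' :
  ty f = Some (x, x') -> ty g = Some (y, y') ->
  heq (Comp (Tens f (Id y')) (Tens (Id x) g)) (Comp (Tens (Id x') g) (Tens f (Id y))).
Proof.
move=> hf hg.
apply: heq_trans; first (apply: heq_interchange; typecheck).
apply: heq_trans; last (apply: heq_sym; apply: heq_interchange; typecheck).
apply: heq_tens.
  by apply: heq_trans; [exact: heq_idr hf | apply: heq_sym; exact: heq_idl hf].
by apply: heq_trans; [exact: heq_idl hg | apply: heq_sym; exact: heq_idr hg].
Qed.

Lemma whisker_exchange a m c (f g : term R) x x' y y' :
  ty f = Some (x, x') -> ty g = Some (y, y') ->
  heq (Comp (whisker a f (m ++ y' ++ c)) (whisker (a ++ x ++ m) g c))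
      (Comp (whisker (a ++ x' ++ m) g c) (whisker a f (m ++ y ++ c))).
Proof.
move=> hf hg.
have hmg : ty (Tens (Id m) g) = Some (m ++ y, m ++ y') by typecheck.
have e1 := whisker_tensIdr a c (m ++ y') hf; rewrite -catA in e1.
have e2 := whisker_tensIdr a c (m ++ y) hf; rewrite -catA in e2.
apply: heq_trans; first exact: heq_comp (heq_sym e1) (heq_sym (whisker_Idtens a c x m hg)).
apply: heq_trans; last exact: heq_comp (whisker_Idtens a c x' m hg) e2.
apply: heq_trans; first (apply: whisker_comp; typecheck).
apply: heq_trans; last (apply: heq_sym; apply: whisker_comp; typecheck).
exact: whisker_cong (heq_tens_exchange hf hmg).
Qed.

(** * Composites of layers *)

(* [chain b [:: L1; ...; Ln]] is [L1 ∘ ... ∘ Ln ∘ b]: layers are listed from the top. *)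
Definition chain b l := foldr (@Comp R) b l.
Arguments chain : simpl never.

Definition cod (o : option (seq bool * seq bool)) := omap snd o.

Lemma chain_cons b L l : chain b (L :: l) = Comp L (chain b l).
Proof. by []. Qed.

Lemma chain_cat b l1 l2 : chain b (l1 ++ l2) = chain (chain b l2) l1.
Proof. by rewrite /chain foldr_cat. Qed.

Lemma chain_cong b b' l :
  heq b b' -> ty (chain b l) <> None -> heq (chain b l) (chain b' l).
Proof.
elim: l => [|L l IH] // hb; rewrite !chain_cons => /Comp_typed [hL hl].
by apply: heq_comp; [apply: heq_refl | apply: IH].
Qed.

Lemma ty_chain B e l :
  cod (ty B) = Some e -> ty (chain B l) = ty_comp (ty (chain (Id e) l)) (ty B).
Proof.
move=> hB; elim: l => [|L l IH]; last by rewrite !chain_cons !ty_Comp IH ty_compA.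
rewrite /chain /=; case: (ty B) hB => [[a e']|] //= [->]; by rewrite eqxx.
Qed.

Lemma ty_chain_None B l : ty B = None -> ty (chain B l) = None.
Proof.
move=> hB; elim: l => [|L l IH] //.
by rewrite chain_cons ty_Comp IH; case: (ty L) => [[]|].
Qed.

Lemma chain_base B e l : cod (ty B) = Some e -> ty (chain B l) <> None ->
  heq (chain B l) (Comp (chain (Id e) l) B).
Proof.
move=> hB; elim: l => [|L l IH].
  rewrite /chain /= => h; apply: heq_sym; apply: heq_ax; first exact: ax_idl;
    by rewrite ty_Comp /=; case: (ty B) hB h => [[a e']|] //= [->]; rewrite eqxx.
rewrite !chain_cons => h; have [hL /IH hl] := Comp_typed h.
apply: heq_trans; first exact: heq_comp (heq_refl hL) hl.
apply: heq_sym; apply: heq_ax; first exact: ax_compA.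
  by rewrite !ty_Comp ty_compA.
by rewrite !ty_Comp ty_compA -ty_Comp -(heq_ty hl) -ty_Comp.
Qed.

Lemma chain_segment B e l l' :
  heq (chain (Id e) l) (chain (Id e) l') -> cod (ty B) = Some e ->
  ty (chain B l) <> None -> heq (chain B l) (chain B l').
Proof.
move=> h hB hl.
have hl' : ty (chain B l') <> None by rewrite (ty_chain _ hB) -(heq_ty h) -(ty_chain _ hB).
apply: heq_trans; first exact: chain_base hB hl.
apply: heq_trans; last exact: heq_sym (chain_base hB hl').
apply: heq_comp => //; apply: heq_refl; move: hl; rewrite (ty_chain _ hB).
by case/ty_comp_typed.
Qed.

Lemma chain_rewrite b l i j m e l' :
  heq (chain (Id e) (take j (drop i l))) (chain (Id e) m) ->
  cod (ty (chain b (drop j (drop i l)))) = Some e ->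
  ty (chain b l) <> None ->
  l' = take i l ++ m ++ drop j (drop i l) ->
  heq (chain b l) (chain b l').
Proof.
move=> h he hl ->.
have E : chain b l = chain (chain (chain b (drop j (drop i l))) (take j (drop i l))) (take i l).
  by rewrite -!chain_cat -catA !cat_take_drop.
rewrite E in hl *; rewrite chain_cat.
apply: chain_cong => //; rewrite chain_cat; apply: chain_segment h he _.
by move: hl; apply: contra_not => hn; rewrite ty_chain_None.
Qed.

Lemma chain_add b l1 A B l2 :
  ty (chain b (l1 ++ Add A B :: l2)) <> None ->
  heq (chain b (l1 ++ Add A B :: l2))
      (Add (chain b (l1 ++ A :: l2)) (chain b (l1 ++ B :: l2))).
Proof.
elim: l1 => [|L l1 IH].
  rewrite !cat0s !chain_cons => h; apply: (heq_ax (ax_compDl _ _ _) _ h).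
  have [/= + _] := Comp_typed h; case: eqP => // eAB _.
  by rewrite /= eAB eqxx.
rewrite !cat_cons !chain_cons => h; have [hL /IH hl] := Comp_typed h.
have eAB : ty (chain b (l1 ++ A :: l2)) = ty (chain b (l1 ++ B :: l2)).
  by move: (Comp_typed h) => [_]; rewrite (heq_ty hl) /=; case: eqP.
apply: heq_trans; first exact: heq_comp (heq_refl hL) hl.
apply: heq_ax; first exact: ax_compDr.
  by rewrite /= eAB !eqxx.
by move: h; rewrite ty_Comp (heq_ty hl) /= eAB eqxx.
Qed.

Definition whiskered L : option (seq bool * term R * seq bool) :=
  if L is Tens (Defs.Id a) (Tens g (Defs.Id b)) then Some (a, g, b) else None.

Lemma whiskeredP L a g b : whiskered L = Some (a, g, b) -> L = whisker a g b.
Proof.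
case: L => // s t; case: s => // a0; case: t => // g0 u; case: u => // b0 /= [<- <- <-] //.
Qed.

Definition rewhisker a b L :=
  if whiskered L is Some (a', g, b') then whisker (a ++ a') g (b' ++ b) else whisker a L b.

Lemma whisker_rewhisker a b L : ty L <> None -> heq (whisker a L b) (rewhisker a b L).
Proof.
rewrite /rewhisker; case E: (whiskered L) => [[[a' g] b']|] hL.
  move/whiskeredP: E hL => ->; rewrite /whisker /=.
  by case hg: (ty g) => [[x y]|] // _; exact: whisker_whisker hg.
by have [x [y hy]] := typedP hL; apply: heq_refl; rewrite /whisker /= hy.
Qed.

Lemma whisker_chain a b B l : ty (chain B l) <> None ->
  heq (whisker a (chain B l) b) (chain (whisker a B b) (map (rewhisker a b) l)).
Proof.
elim: l => [|L l IH] h.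
  by have [x [y hy]] := typedP h; apply: heq_refl; rewrite /whisker /= hy.
rewrite chain_cons /= chain_cons in h *.
have [x [y [z [hL hl]]]] := Comp_typedP h.
apply: heq_trans; first exact: heq_sym (whisker_comp a b hL hl).
by apply: heq_comp; [apply: whisker_rewhisker; rewrite hL | apply: IH; rewrite hl].
Qed.

Lemma whisker_chain_Id a b e l : ty (chain (Id e) l) <> None ->
  heq (whisker a (chain (Id e) l) b) (chain (Id (a ++ e ++ b)) (map (rewhisker a b) l)).
Proof.
move=> h; apply: heq_trans; first exact: whisker_chain h.
apply: chain_cong; first exact: whisker_id.
rewrite -(heq_ty (whisker_chain a b h)).
by have [x [y hy]] := typedP h; rewrite /whisker /= hy.
Qed.

Lemma ty_chain_Id_dom e l x y : ty (chain (Id e) l) = Some (x, y) -> e = x.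
Proof.
elim: l x y => [|L l IH] x y; first by rewrite /chain /= => -[].
rewrite chain_cons ty_Comp; case: (ty L) => [[u v]|] //=.
case E: (ty (chain (Id e) l)) => [[u0 v0]|] //=; case: eqP => // _ [<- _]; exact: IH E.
Qed.

Lemma chain_comp A B l1 l2 b e :
  heq A (chain (Id b) l1) -> heq B (chain (Id e) l2) -> ty (Comp A B) <> None ->
  heq (Comp A B) (chain (Id e) (l1 ++ l2)).
Proof.
move=> hA hB h; have [x [y [z [tA tB]]]] := Comp_typedP h.
rewrite chain_cat; apply: heq_trans; first exact: heq_comp hA hB.
have tB' : ty (chain (Id e) l2) = Some (x, y) by rewrite -(heq_ty hB).
have tA' : ty (chain (Id b) l1) = Some (y, z) by rewrite -(heq_ty hA).
have Eb := ty_chain_Id_dom tA'; subst b.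
apply: heq_sym; apply: chain_base; first by rewrite tB'.
by rewrite (ty_chain (e := y)) ?tA' ?tB' //= eqxx.
Qed.

Lemma chain1 A e z : ty A = Some (e, z) -> heq (chain (Id e) [:: A]) A.
Proof. move=> hA; rewrite chain_cons; exact: heq_idr hA. Qed.

Lemma chain2 A B e z : ty B = Some (e, z) -> ty (Comp A B) <> None ->
  heq (chain (Id e) [:: A; B]) (Comp A B).
Proof.
move=> hB h; rewrite !chain_cons; have [hA _] := Comp_typed h.
by apply: heq_comp; [exact: heq_refl | exact: heq_idr hB].
Qed.

Lemma heq_chain1 A L e z : heq A L -> ty L = Some (e, z) -> heq A (chain (Id e) [:: L]).
Proof. by move=> h hL; apply: heq_trans h _; apply: heq_sym; exact: chain1 hL. Qed.

Lemma heq_chain3 A B C A' B' C' x y :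
  heq A A' -> heq B B' -> heq C C' -> ty C' = Some (x, y) ->
  heq (Comp A (Comp B C)) (chain (Id x) [:: A'; B'; C']).
Proof.
move=> hA hB hC hC'; rewrite !chain_cons.
apply: heq_comp hA (heq_comp hB _).
by apply: heq_trans hC _; apply: heq_sym; exact: heq_idr hC'.
Qed.

Lemma chain1_cong e L L' : heq L L' -> heq (chain (Id e) [:: L]) (chain (Id e) [:: L']).
Proof. move=> h; rewrite !chain_cons; exact: heq_comp h (heq_id e). Qed.

Fixpoint layers t : seq (term R) :=
  match t with
  | Defs.Id _ => [::]
  | Comp s u => layers s ++ layers u
  | Tens s u => map (rewhisker [::] (odflt [::] (cod (ty u)))) (layers s) ++
                map (rewhisker (odflt [::] (omap fst (ty s))) [::]) (layers u)
  | _ => [:: whisker [::] t [::]]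
  end.

Lemma heq_layers t x y : ty t = Some (x, y) -> heq t (chain (Id x) (layers t)).
Proof.
have atom u x' y' : ty u = Some (x', y') -> heq u (chain (Id x') [:: whisker [::] u [::]]).
  move=> hu; apply: heq_sym; apply: heq_trans; first (apply: chain1; typecheck).
  exact: whisker0 hu.
elim: t x y => [e|g|s IHs u IHu|s IHs u IHu|e f|s IHs u IHu|a s IHs] x y ht.
- by move: ht => /= [<- _]; exact: heq_id.
- exact: atom ht.
- have [x' [y' [z' [hs hu]]]] := Comp_typedP (s := s) (t := u) (ltac:(by rewrite ht)).
  move: ht; rewrite ty_Comp hs hu /= eqxx => -[<- _].
  by apply: chain_comp; [exact: IHs hs | exact: IHu hu | rewrite /= hs hu /= eqxx].
- move: ht => /=; case hs: (ty s) => [[a1 b1]|] //; case hu: (ty u) => [[a2 b2]|] // [<- _].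
  apply: heq_trans; first exact: heq_tens_comp hs hu.
  apply: chain_comp; last by rewrite /= hs hu /= eqxx.
  + apply: heq_trans; first (apply: heq_sym; apply: heq_tens1l; typecheck).
    apply: heq_trans; first exact: whisker_cong (IHs _ _ hs).
    by apply: whisker_chain_Id; rewrite -(heq_ty (IHs _ _ hs)) hs.
  + apply: heq_trans.
      by apply: heq_tens; [exact: heq_id | apply: heq_sym; apply: heq_tens1r; typecheck].
    apply: heq_trans; first exact: whisker_cong (IHu _ _ hu).
    have := whisker_chain_Id a1 [::] (l := layers u) (e := a2); rewrite cats0; apply.
    by rewrite -(heq_ty (IHu _ _ hu)) hu.
- exact: atom ht.
- exact: atom ht.
- exact: atom ht.
Qed.

Lemma layers_heq s t x y : heq s t -> ty s = Some (x, y) ->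
  heq (chain (Id x) (layers s)) (chain (Id x) (layers t)).
Proof.
move=> h hs; have ht : ty t = Some (x, y) by rewrite -(heq_ty h).
apply: heq_trans; first exact: heq_sym (heq_layers hs).
apply: heq_trans h _; exact: heq_layers ht.
Qed.

Lemma chain_whisker a b e l l' :
  heq (chain (Id e) l) (chain (Id e) l') -> ty (chain (Id e) l) <> None ->
  heq (chain (Id (a ++ e ++ b)) (map (rewhisker a b) l))
      (chain (Id (a ++ e ++ b)) (map (rewhisker a b) l')).
Proof.
move=> h hl; have hl' : ty (chain (Id e) l') <> None by rewrite -(heq_ty h).
apply: heq_trans (heq_sym (whisker_chain_Id a b hl)) _.
apply: heq_trans _ (whisker_chain_Id a b hl').
exact: whisker_cong.
Qed.

Lemma chain_expand a b x y t l : heq t (chain (Id x) l) -> ty t = Some (x, y) ->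
  heq (chain (Id (a ++ x ++ b)) [:: whisker a t b])
      (chain (Id (a ++ x ++ b)) (map (rewhisker a b) l)).
Proof.
move=> h ht; have hl : ty (chain (Id x) l) <> None by rewrite -(heq_ty h) ht.
apply: heq_trans; first (apply: chain1; rewrite /whisker; typecheck).
apply: heq_trans; first exact: whisker_cong h.
exact: whisker_chain_Id.
Qed.

Lemma chain_split a b (f g : term R) x y z :
  ty f = Some (y, z) -> ty g = Some (x, y) ->
  heq (chain (Id (a ++ x ++ b)) [:: whisker a (Comp f g) b])
      (chain (Id (a ++ x ++ b)) [:: whisker a f b; whisker a g b]).
Proof.
move=> hf hg.
apply: heq_trans; first (apply: chain1; rewrite /whisker; typecheck).
apply: heq_trans; first exact: heq_sym (whisker_comp a b hf hg).
apply: heq_sym; apply: chain2; rewrite /whisker; typecheck.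
Qed.

Lemma chain_drop_Id a e b :
  heq (chain (Id (a ++ e ++ b)) [:: whisker a (Id e) b]) (chain (Id (a ++ e ++ b)) [::]).
Proof.
apply: heq_trans; first (apply: chain1; rewrite /whisker; typecheck).
exact: whisker_id.
Qed.

Lemma chain_exchange a m c (f g : term R) x x' y y' :
  ty f = Some (x, x') -> ty g = Some (y, y') ->
  heq (chain (Id (a ++ x ++ m ++ y ++ c)) [:: whisker a f (m ++ y' ++ c);
                                              whisker (a ++ x ++ m) g c])
      (chain (Id (a ++ x ++ m ++ y ++ c)) [:: whisker (a ++ x' ++ m) g c;
                                              whisker a f (m ++ y ++ c)]).
Proof.
move=> hf hg.
apply: heq_trans; first (apply: chain2; rewrite /whisker; typecheck).
apply: heq_trans; first exact: (whisker_exchange a m c hf hg).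
apply: heq_sym; apply: chain2; rewrite /whisker; typecheck.
Qed.

Ltac typecheck_layers := rewrite /chain /whisker /=; typecheck.

(* [rewrite_layers i j l' H] rewrites the [j] layers starting at position [i] with [H],
   leaving the layer list [l']. *)
Tactic Notation "rewrite_layers" constr(i) constr(j) uconstr(l') uconstr(H) :=
  eapply heq_trans;
  [ eapply (chain_rewrite (i := i) (j := j) (l' := l'));
    [ eapply H; typecheck_layers | typecheck_layers | typecheck_layers | reflexivity ] | ].

Ltac layers_of_axiom L := exact: (layers_heq (ltac:(by_axiom L)) erefl).

(** * The relations of H' as rewrite rules on layers *)

Lemma layers_zigzag1 :
  heq (chain (Id [:: Pp]) [:: whisker [:: Pp] capMP [::]; whisker [::] cupPM [:: Pp]])
      (chain (Id [:: Pp]) [::]).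
Proof. layers_of_axiom ax_zz1. Qed.

Lemma layers_zigzag2 :
  heq (chain (Id [:: Pp]) [:: whisker [::] capPM [:: Pp]; whisker [:: Pp] cupMP [::]])
      (chain (Id [:: Pp]) [::]).
Proof. layers_of_axiom ax_zz2. Qed.

Lemma layers_X2 :
  heq (chain (Id [:: Pp; Pp]) [:: whisker [::] X [::]; whisker [::] X [::]])
      (chain (Id [:: Pp; Pp]) [::]).
Proof. layers_of_axiom ax_X2. Qed.

Lemma layers_braid :
  heq (chain (Id [:: Pp; Pp; Pp])
        [:: whisker [::] X [:: Pp]; whisker [:: Pp] X [::]; whisker [::] X [:: Pp]])
      (chain (Id [:: Pp; Pp; Pp])
        [:: whisker [:: Pp] X [::]; whisker [::] X [:: Pp]; whisker [:: Pp] X [::]]).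
Proof. layers_of_axiom ax_braid. Qed.

Lemma layers_Yrot :
  heq (chain (Id [:: Pp; Mm]) [:: whisker [::] Y [::]])
      (chain (Id [:: Pp; Mm]) [:: whisker [:: Mm; Pp] capPM [::]; whisker [:: Mm] X [:: Mm];
                                  whisker [::] cupMP [:: Pp; Mm]]).
Proof. layers_of_axiom ax_Yrot. Qed.

Lemma layers_Y'rot :
  heq (chain (Id [:: Mm; Pp]) [:: whisker [::] Y' [::]])
      (chain (Id [:: Mm; Pp]) [:: whisker [::] capMP [:: Pp; Mm]; whisker [:: Mm] X [:: Mm];
                                  whisker [:: Mm; Pp] cupPM [::]]).
Proof. layers_of_axiom ax_Y'rot. Qed.

Lemma layers_leftcurl :
  heq (chain (Id [:: Pp]) [:: whisker [::] capMP [:: Pp]; whisker [:: Mm] X [::];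
                              whisker [::] cupMP [:: Pp]])
      (chain (Id [:: Pp]) [:: whisker [::] (Zero [:: Pp] [:: Pp]) [::]]).
Proof. layers_of_axiom ax_leftcurl. Qed.

Lemma layers_capPM_Y :
  heq (chain (Id [:: Pp; Pp; Mm]) [:: whisker [::] capPM [:: Pp]; whisker [:: Pp] Y [::]])
      (chain (Id [:: Pp; Pp; Mm]) [:: whisker [:: Pp] capPM [::]; whisker [::] X [:: Mm]]).
Proof.
rewrite_layers 1 1 [:: whisker [::] capPM [:: Pp]; whisker [:: Pp; Mm; Pp] capPM [::];
                       whisker [:: Pp; Mm] X [:: Mm]; whisker [:: Pp] cupMP [:: Pp; Mm]]
  (chain_whisker [:: Pp] [::] layers_Yrot).
rewrite_layers 0 2 [:: whisker [:: Pp] capPM [::]; whisker [::] capPM [:: Pp; Pp; Mm];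
                       whisker [:: Pp; Mm] X [:: Mm]; whisker [:: Pp] cupMP [:: Pp; Mm]]
  (chain_exchange [::] [:: Pp] [::] (f := capPM) (g := capPM) erefl erefl).
rewrite_layers 1 2 [:: whisker [:: Pp] capPM [::]; whisker [::] X [:: Mm];
                       whisker [::] capPM [:: Pp; Pp; Mm]; whisker [:: Pp] cupMP [:: Pp; Mm]]
  (chain_exchange [::] [::] [:: Mm] (f := capPM) (g := X) erefl erefl).
rewrite_layers 2 2 [:: whisker [:: Pp] capPM [::]; whisker [::] X [:: Mm]]
  (chain_whisker [::] [:: Pp; Mm] layers_zigzag2).
by apply: heq_refl; typecheck_layers.
Qed.

Lemma layers_Y'_cupPM :
  heq (chain (Id [:: Pp]) [:: whisker [:: Pp] Y' [::]; whisker [::] cupPM [:: Pp]])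
      (chain (Id [:: Pp]) [:: whisker [::] X [:: Mm]; whisker [:: Pp] cupPM [::]]).
Proof.
rewrite_layers 0 1 [:: whisker [:: Pp] capMP [:: Pp; Mm]; whisker [:: Pp; Mm] X [:: Mm];
                       whisker [:: Pp; Mm; Pp] cupPM [::]; whisker [::] cupPM [:: Pp]]
  (chain_whisker [:: Pp] [::] layers_Y'rot).
rewrite_layers 2 2 [:: whisker [:: Pp] capMP [:: Pp; Mm]; whisker [:: Pp; Mm] X [:: Mm];
                       whisker [::] cupPM [:: Pp; Pp; Mm]; whisker [:: Pp] cupPM [::]]
  (heq_sym (chain_exchange [::] [:: Pp] [::] (f := cupPM) (g := cupPM) erefl erefl)).
rewrite_layers 1 2 [:: whisker [:: Pp] capMP [:: Pp; Mm]; whisker [::] cupPM [:: Pp; Pp; Mm];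
                       whisker [::] X [:: Mm]; whisker [:: Pp] cupPM [::]]
  (heq_sym (chain_exchange [::] [::] [:: Mm] (f := cupPM) (g := X) erefl erefl)).
rewrite_layers 0 2 [:: whisker [::] X [:: Mm]; whisker [:: Pp] cupPM [::]]
  (chain_whisker [::] [:: Pp; Mm] layers_zigzag1).
by apply: heq_refl; typecheck_layers.
Qed.

Lemma layers_Y_cupPM :
  heq (chain (Id [::]) [:: whisker [::] Y [::]; whisker [::] cupPM [::]])
      (chain (Id [::]) [:: whisker [:: Mm; Pp] capPM [::]; whisker [:: Mm] X [:: Mm];
                           whisker [:: Mm; Pp] cupPM [::]; whisker [::] cupMP [::]]).
Proof.
rewrite_layers 0 1 [:: whisker [:: Mm; Pp] capPM [::]; whisker [:: Mm] X [:: Mm];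
                       whisker [::] cupMP [:: Pp; Mm]; whisker [::] cupPM [::]]
  (chain_whisker [::] [::] layers_Yrot).
rewrite_layers 2 2 [:: whisker [:: Mm; Pp] capPM [::]; whisker [:: Mm] X [:: Mm];
                       whisker [:: Mm; Pp] cupPM [::]; whisker [::] cupMP [::]]
  (chain_exchange [::] [::] [::] (f := cupMP) (g := cupPM) erefl erefl).
by apply: heq_refl; typecheck_layers.
Qed.

Lemma Id_MP_expand : heq (Id [:: Mm; Pp]) (Add (Comp Y Y') (Comp cupMP capMP)).
Proof.
have hcc : ty (Comp cupMP capMP) = Some ([:: Mm; Pp], [:: Mm; Pp]) by [].
apply: heq_sym; apply: heq_trans.
  by apply: heq_add; [by_axiom ax_YY' | exact: heq_refl].
apply: heq_trans; first by_axiom ax_addA.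
apply: heq_trans.
  apply: heq_add; first exact: heq_id.
  by apply: heq_add; [exact: heq_refl | apply: heq_sym; by_axiom ax_scale1].
apply: heq_trans.
  by apply: heq_add; [exact: heq_id | apply: heq_sym; by_axiom ax_scaleDl].
rewrite GRing.addNr; apply: heq_trans.
  by apply: heq_add; [exact: heq_id | by_axiom (ax_scale0 (R := R) [:: Mm; Pp] [:: Mm; Pp])].
apply: heq_trans; first by_axiom ax_addC.
by_axiom ax_add0.
Qed.

Lemma dot_slide_YY' :
  heq (chain (Id [:: Pp; Pp]) [:: whisker [::] X [::]; whisker [:: Pp] capPM [:: Pp];
                                  whisker [:: Pp; Pp] Y [::]; whisker [:: Pp; Pp] Y' [::];
                                  whisker [::] X [:: Mm; Pp]; whisker [:: Pp] cupPM [:: Pp]])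
      (chain (Id [:: Pp; Pp]) [:: whisker [:: Pp; Pp] capPM [::]; whisker [:: Pp] X [:: Mm];
                                  whisker [:: Pp; Pp] cupPM [::]; whisker [::] X [::]]).
Proof.
rewrite_layers 1 2 [:: whisker [::] X [::]; whisker [:: Pp; Pp] capPM [::];
                       whisker [:: Pp] X [:: Mm]; whisker [:: Pp; Pp] Y' [::];
                       whisker [::] X [:: Mm; Pp]; whisker [:: Pp] cupPM [:: Pp]]
  (chain_whisker [:: Pp] [::] layers_capPM_Y).
rewrite_layers 0 2 [:: whisker [:: Pp; Pp] capPM [::]; whisker [::] X [:: Pp; Mm];
                       whisker [:: Pp] X [:: Mm]; whisker [:: Pp; Pp] Y' [::];
                       whisker [::] X [:: Mm; Pp]; whisker [:: Pp] cupPM [:: Pp]]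
  (chain_exchange [::] [::] [::] (f := X) (g := capPM) erefl erefl).
rewrite_layers 3 2 [:: whisker [:: Pp; Pp] capPM [::]; whisker [::] X [:: Pp; Mm];
                       whisker [:: Pp] X [:: Mm]; whisker [::] X [:: Pp; Mm];
                       whisker [:: Pp; Pp] Y' [::]; whisker [:: Pp] cupPM [:: Pp]]
  (heq_sym (chain_exchange [::] [::] [::] (f := X) (g := Y') erefl erefl)).
rewrite_layers 1 3 [:: whisker [:: Pp; Pp] capPM [::]; whisker [:: Pp] X [:: Mm];
                       whisker [::] X [:: Pp; Mm]; whisker [:: Pp] X [:: Mm];
                       whisker [:: Pp; Pp] Y' [::]; whisker [:: Pp] cupPM [:: Pp]]
  (chain_whisker [::] [:: Mm] layers_braid).
rewrite_layers 4 2 [:: whisker [:: Pp; Pp] capPM [::]; whisker [:: Pp] X [:: Mm];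
                       whisker [::] X [:: Pp; Mm]; whisker [:: Pp] X [:: Mm];
                       whisker [:: Pp] X [:: Mm]; whisker [:: Pp; Pp] cupPM [::]]
  (chain_whisker [:: Pp] [::] layers_Y'_cupPM).
rewrite_layers 3 2 [:: whisker [:: Pp; Pp] capPM [::]; whisker [:: Pp] X [:: Mm];
                       whisker [::] X [:: Pp; Mm]; whisker [:: Pp; Pp] cupPM [::]]
  (chain_whisker [:: Pp] [:: Mm] layers_X2).
rewrite_layers 0 2 [:: whisker [:: Pp] capPM [:: Pp]; whisker [:: Pp; Pp] Y [::];
                       whisker [::] X [:: Pp; Mm]; whisker [:: Pp; Pp] cupPM [::]]
  (heq_sym (chain_whisker [:: Pp] [::] layers_capPM_Y (ltac:(typecheck_layers)))).
rewrite_layers 2 2 [:: whisker [:: Pp] capPM [:: Pp]; whisker [:: Pp; Pp] Y [::];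
                       whisker [:: Pp; Pp] cupPM [::]; whisker [::] X [::]]
  (chain_exchange [::] [::] [::] (f := X) (g := cupPM) erefl erefl).
rewrite_layers 1 2 [:: whisker [:: Pp] capPM [:: Pp]; whisker [:: Pp; Pp; Mm; Pp] capPM [::];
                       whisker [:: Pp; Pp; Mm] X [:: Mm]; whisker [:: Pp; Pp; Mm; Pp] cupPM [::];
                       whisker [:: Pp; Pp] cupMP [::]; whisker [::] X [::]]
  (chain_whisker [:: Pp; Pp] [::] layers_Y_cupPM).
rewrite_layers 0 2 [:: whisker [:: Pp; Pp] capPM [::]; whisker [:: Pp] capPM [:: Pp; Pp; Mm];
                       whisker [:: Pp; Pp; Mm] X [:: Mm]; whisker [:: Pp; Pp; Mm; Pp] cupPM [::];
                       whisker [:: Pp; Pp] cupMP [::]; whisker [::] X [::]]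
  (chain_exchange [:: Pp] [:: Pp] [::] (f := capPM) (g := capPM) erefl erefl).
rewrite_layers 1 2 [:: whisker [:: Pp; Pp] capPM [::]; whisker [:: Pp] X [:: Mm];
                       whisker [:: Pp] capPM [:: Pp; Pp; Mm];
                       whisker [:: Pp; Pp; Mm; Pp] cupPM [::]; whisker [:: Pp; Pp] cupMP [::];
                       whisker [::] X [::]]
  (chain_exchange [:: Pp] [::] [:: Mm] (f := capPM) (g := X) erefl erefl).
rewrite_layers 2 2 [:: whisker [:: Pp; Pp] capPM [::]; whisker [:: Pp] X [:: Mm];
                       whisker [:: Pp; Pp] cupPM [::]; whisker [:: Pp] capPM [:: Pp];
                       whisker [:: Pp; Pp] cupMP [::]; whisker [::] X [::]]
  (chain_exchange [:: Pp] [:: Pp] [::] (f := capPM) (g := cupPM) erefl erefl).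
rewrite_layers 3 2 [:: whisker [:: Pp; Pp] capPM [::]; whisker [:: Pp] X [:: Mm];
                       whisker [:: Pp; Pp] cupPM [::]; whisker [::] X [::]]
  (chain_whisker [:: Pp] [::] layers_zigzag2).
by apply: heq_refl; typecheck_layers.
Qed.

Lemma dot_slide_cupcap :
  heq (chain (Id [:: Pp; Pp]) [:: whisker [::] X [::]; whisker [:: Pp] capPM [:: Pp];
                                  whisker [:: Pp; Pp] cupMP [::]; whisker [:: Pp; Pp] capMP [::];
                                  whisker [::] X [:: Mm; Pp]; whisker [:: Pp] cupPM [:: Pp]])
      (chain (Id [:: Pp; Pp]) [::]).
Proof.
rewrite_layers 1 2 [:: whisker [::] X [::]; whisker [:: Pp; Pp] capMP [::];
                       whisker [::] X [:: Mm; Pp]; whisker [:: Pp] cupPM [:: Pp]]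
  (chain_whisker [:: Pp] [::] layers_zigzag2).
rewrite_layers 1 2 [:: whisker [::] X [::]; whisker [::] X [::]; whisker [:: Pp; Pp] capMP [::];
                       whisker [:: Pp] cupPM [:: Pp]]
  (heq_sym (chain_exchange [::] [::] [::] (f := X) (g := capMP) erefl erefl)).
rewrite_layers 2 2 [:: whisker [::] X [::]; whisker [::] X [::]]
  (chain_whisker [:: Pp] [::] layers_zigzag1).
rewrite_layers 0 2 [::] (layers_X2).
by apply: heq_refl; typecheck_layers.
Qed.

(* Insert id_{-+} = Y Y' + cup cap between the cap of the dot and the crossing: the first
   summand is turned into (1 ⊗ x) X by the braid relation, the second into the identity. *)
Lemma dot_slide :
  heq (Comp X (Tens (dot R) (Id [:: Pp])))
      (Add (Comp (Tens (Id [:: Pp]) (dot R)) X) (Id [:: Pp; Pp])).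
Proof.
apply: heq_trans.
  exact: (heq_layers (t := Comp X (Tens (dot R) (Id [:: Pp]))) (x := [:: Pp; Pp]) erefl).
rewrite_layers 2 0 [:: whisker [::] X [::]; whisker [:: Pp] capPM [:: Pp];
                       whisker [:: Pp; Pp] (Id [:: Mm; Pp]) [::]; whisker [::] X [:: Mm; Pp];
                       whisker [:: Pp] cupPM [:: Pp]]
  (heq_sym (chain_drop_Id [:: Pp; Pp] [:: Mm; Pp] [::])).
rewrite_layers 2 1 [:: whisker [::] X [::]; whisker [:: Pp] capPM [:: Pp];
                       whisker [:: Pp; Pp] (Add (Comp Y Y') (Comp cupMP capMP)) [::];
                       whisker [::] X [:: Mm; Pp]; whisker [:: Pp] cupPM [:: Pp]]
  (chain1_cong [:: Pp; Pp; Mm; Pp] (whisker_cong [:: Pp; Pp] [::] Id_MP_expand)).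
rewrite_layers 2 1 [:: whisker [::] X [::]; whisker [:: Pp] capPM [:: Pp];
                       Add (whisker [:: Pp; Pp] (Comp Y Y') [::])
                           (whisker [:: Pp; Pp] (Comp cupMP capMP) [::]);
                       whisker [::] X [:: Mm; Pp]; whisker [:: Pp] cupPM [:: Pp]]
  (chain1_cong [:: Pp; Pp; Mm; Pp]
     (whisker_add [:: Pp; Pp] [::] (A := Comp Y Y') (B := Comp cupMP capMP) erefl erefl)).
apply: heq_trans.
  apply: (chain_add (l1 := [:: whisker [::] X [::]; whisker [:: Pp] capPM [:: Pp]])).
  by typecheck_layers.
apply: heq_add.
- rewrite_layers 2 1 [:: whisker [::] X [::]; whisker [:: Pp] capPM [:: Pp];
                         whisker [:: Pp; Pp] Y [::]; whisker [:: Pp; Pp] Y' [::];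
                         whisker [::] X [:: Mm; Pp]; whisker [:: Pp] cupPM [:: Pp]]
    (chain_split [:: Pp; Pp] [::] (f := Y) (g := Y') erefl erefl).
  apply: heq_trans dot_slide_YY' _; apply: heq_sym.
  exact: (heq_layers (t := Comp (Tens (Id [:: Pp]) (dot R)) X) (x := [:: Pp; Pp]) erefl).
- rewrite_layers 2 1 [:: whisker [::] X [::]; whisker [:: Pp] capPM [:: Pp];
                         whisker [:: Pp; Pp] cupMP [::]; whisker [:: Pp; Pp] capMP [::];
                         whisker [::] X [:: Mm; Pp]; whisker [:: Pp] cupPM [:: Pp]]
    (chain_split [:: Pp; Pp] [::] (f := cupMP) (g := capMP) erefl erefl).
  exact: dot_slide_cupcap.
Qed.

(** * Closing up dotted crossings *)

Definition ccw_circle u := Comp capMP (Comp (Tens (Id [:: Mm]) u) cupMP).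
Definition cw_circle u := Comp capPM (Comp (Tens u (Id [:: Mm])) cupPM).

Definition right_trace t :=
  Comp (Tens (Id [:: Pp]) capPM) (Comp (Tens t (Id [:: Mm])) (Tens (Id [:: Pp]) cupPM)).

Definition close_up t := ccw_circle (right_trace t).

Definition crossing u v := Comp (Tens (Id [:: Pp]) u) (Comp X (Tens v (Id [:: Pp]))).

Lemma layers_ccw_circle u : ty u = Some ([:: Pp], [:: Pp]) ->
  heq (ccw_circle u)
      (chain (Id [::]) [:: whisker [::] capMP [::]; whisker [:: Mm] u [::];
                           whisker [::] cupMP [::]]).
Proof.
move=> hu; apply: heq_chain3; [| exact: whiskerl hu | |by []];
  by apply: heq_sym; apply: whisker0.
Qed.

Lemma layers_cw_circle u : ty u = Some ([:: Pp], [:: Pp]) ->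
  heq (cw_circle u)
      (chain (Id [::]) [:: whisker [::] capPM [::]; whisker [::] u [:: Mm];
                           whisker [::] cupPM [::]]).
Proof.
move=> hu; apply: heq_chain3; [| exact: whiskerr hu | |by []];
  by apply: heq_sym; apply: whisker0.
Qed.

Lemma layers_right_trace t : ty t = Some ([:: Pp; Pp], [:: Pp; Pp]) ->
  heq (right_trace t)
      (chain (Id [:: Pp]) [:: whisker [:: Pp] capPM [::]; whisker [::] t [:: Mm];
                              whisker [:: Pp] cupPM [::]]).
Proof.
by move=> ht; apply: heq_chain3; [exact: whiskerl | exact: whiskerr ht | exact: whiskerl |].
Qed.

Lemma layers_crossing u v : ty u = Some ([:: Pp], [:: Pp]) -> ty v = Some ([:: Pp], [:: Pp]) ->
  heq (crossing u v)
      (chain (Id [:: Pp; Pp]) [:: whisker [:: Pp] u [::]; whisker [::] X [::];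
                                  whisker [::] v [:: Pp]]).
Proof.
move=> hu hv; apply: heq_chain3; [exact: whiskerl hu | | exact: whiskerr hv | typecheck_layers].
by apply: heq_sym; apply: whisker0.
Qed.

Lemma layers_tens u v : ty u = Some ([:: Pp], [:: Pp]) -> ty v = Some ([:: Pp], [:: Pp]) ->
  heq (Tens u v) (chain (Id [:: Pp; Pp]) [:: whisker [::] u [:: Pp]; whisker [:: Pp] v [::]]).
Proof.
move=> hu hv; apply: heq_trans; first exact: heq_tens_comp hu hv.
rewrite !chain_cons; apply: heq_comp; first exact: whiskerr hu.
apply: heq_trans; first exact: whiskerl hv.
apply: heq_sym; apply: heq_idr; typecheck_layers.
Qed.

Lemma chain_zero_layer A B C :
  ty A = Some ([:: Pp; Mm], [::]) -> ty B = Some ([:: Pp; Mm], [:: Pp; Mm]) ->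
  ty C = Some ([::], [:: Pp; Mm]) ->
  heq (chain (Id [::]) [:: A; B; whisker [::] (Zero [:: Pp] [:: Pp]) [:: Mm]; C]) (Zero [::] [::]).
Proof.
move=> hA hB hC; rewrite !chain_cons.
have hZ : heq (whisker [::] (Zero [:: Pp] [:: Pp]) [:: Mm]) (Zero [:: Pp; Mm] [:: Pp; Mm]).
  apply: heq_trans.
    apply: heq_tens; first exact: heq_id.
    by_axiom (ax_tens0l [:: Pp] [:: Pp] [:: Pp; Mm] [:: Pp; Mm] (Id [:: Mm])).
  by_axiom (ax_tens0r [:: Pp; Mm] [:: Pp; Mm] [:: Pp; Mm] [:: Pp; Mm] (Id [::])).
have hZC : heq (Comp (whisker [::] (Zero [:: Pp] [:: Pp]) [:: Mm]) (chain (Id [::]) [:: C]))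
               (Zero [::] [:: Pp; Mm]).
  apply: heq_trans; first by apply: heq_comp hZ _; apply: heq_refl; typecheck_layers.
  by_axiom (ax_comp0l [:: Pp; Mm] [:: Pp; Mm] [::] (chain (Id [::]) [:: C])).
apply: heq_trans; first by apply: heq_comp (heq_comp _ hZC); apply: heq_refl; typecheck.
apply: heq_trans.
  apply: heq_comp; first by apply: heq_refl; typecheck.
  by_axiom (ax_comp0r [::] [:: Pp; Mm] [:: Pp; Mm] B).
by_axiom (ax_comp0r [::] [:: Pp; Mm] [::] A).
Qed.

(* The left curl kills the closure. *)
Lemma close_up_crossing_Id u : ty u = Some ([:: Pp], [:: Pp]) ->
  heq (close_up (crossing u (Id [:: Pp]))) (Zero [::] [::]).
Proof.
move=> hu; have hc : ty (crossing u (Id [:: Pp])) = Some ([:: Pp; Pp], [:: Pp; Pp]).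
  by rewrite /crossing; typecheck.
apply: heq_trans; first by apply: layers_ccw_circle; rewrite /right_trace; typecheck.
rewrite_layers 1 1 [:: whisker [::] capMP [::]; whisker [:: Mm; Pp] capPM [::];
                       whisker [:: Mm] (crossing u (Id [:: Pp])) [:: Mm];
                       whisker [:: Mm; Pp] cupPM [::]; whisker [::] cupMP [::]]
  (chain_expand [:: Mm] [::] (layers_right_trace hc) (ltac:(rewrite /right_trace; typecheck))).
rewrite_layers 2 1 [:: whisker [::] capMP [::]; whisker [:: Mm; Pp] capPM [::];
                       whisker [:: Mm; Pp] u [:: Mm]; whisker [:: Mm] X [:: Mm];
                       whisker [:: Mm] (Id [:: Pp]) [:: Pp; Mm]; whisker [:: Mm; Pp] cupPM [::];
                       whisker [::] cupMP [::]]
  (chain_expand [:: Mm] [:: Mm] (layers_crossing (v := Id [:: Pp]) hu erefl) hc).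
rewrite_layers 4 1 [:: whisker [::] capMP [::]; whisker [:: Mm; Pp] capPM [::];
                       whisker [:: Mm; Pp] u [:: Mm]; whisker [:: Mm] X [:: Mm];
                       whisker [:: Mm; Pp] cupPM [::]; whisker [::] cupMP [::]]
  (chain_drop_Id [:: Mm] [:: Pp] [:: Pp; Mm]).
rewrite_layers 4 2 [:: whisker [::] capMP [::]; whisker [:: Mm; Pp] capPM [::];
                       whisker [:: Mm; Pp] u [:: Mm]; whisker [:: Mm] X [:: Mm];
                       whisker [::] cupMP [:: Pp; Mm]; whisker [::] cupPM [::]]
  (heq_sym (chain_exchange [::] [::] [::] (f := cupMP) (g := cupPM) erefl erefl)).
rewrite_layers 0 2 [:: whisker [::] capPM [::]; whisker [::] capMP [:: Pp; Mm];
                       whisker [:: Mm; Pp] u [:: Mm]; whisker [:: Mm] X [:: Mm];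
                       whisker [::] cupMP [:: Pp; Mm]; whisker [::] cupPM [::]]
  (chain_exchange [::] [::] [::] (f := capMP) (g := capPM) erefl erefl).
rewrite_layers 1 2 [:: whisker [::] capPM [::]; whisker [::] u [:: Mm];
                       whisker [::] capMP [:: Pp; Mm]; whisker [:: Mm] X [:: Mm];
                       whisker [::] cupMP [:: Pp; Mm]; whisker [::] cupPM [::]]
  (chain_exchange [::] [::] [:: Mm] (f := capMP) (g := u) erefl hu).
rewrite_layers 2 3 [:: whisker [::] capPM [::]; whisker [::] u [:: Mm];
                       whisker [::] (Zero [:: Pp] [:: Pp]) [:: Mm]; whisker [::] cupPM [::]]
  (chain_whisker [::] [:: Mm] layers_leftcurl).
by apply: chain_zero_layer; typecheck.
Qed.

Lemma close_up_tens u v : ty u = Some ([:: Pp], [:: Pp]) -> ty v = Some ([:: Pp], [:: Pp]) ->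
  heq (close_up (Tens u v)) (Comp (ccw_circle u) (cw_circle v)).
Proof.
move=> hu hv.
have huv : ty (Tens u v) = Some ([:: Pp; Pp], [:: Pp; Pp]) by typecheck.
have hcw : ty (cw_circle v) = Some ([::], [::]) by rewrite /cw_circle; typecheck.
apply: heq_trans; first by apply: layers_ccw_circle; rewrite /right_trace; typecheck.
rewrite_layers 1 1 [:: whisker [::] capMP [::]; whisker [:: Mm; Pp] capPM [::];
                       whisker [:: Mm] (Tens u v) [:: Mm]; whisker [:: Mm; Pp] cupPM [::];
                       whisker [::] cupMP [::]]
  (chain_expand [:: Mm] [::] (layers_right_trace huv) (ltac:(rewrite /right_trace; typecheck))).
rewrite_layers 2 1 [:: whisker [::] capMP [::]; whisker [:: Mm; Pp] capPM [::];
                       whisker [:: Mm] u [:: Pp; Mm]; whisker [:: Mm; Pp] v [:: Mm];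
                       whisker [:: Mm; Pp] cupPM [::]; whisker [::] cupMP [::]]
  (chain_expand [:: Mm] [:: Mm] (layers_tens hu hv) huv).
rewrite_layers 1 2 [:: whisker [::] capMP [::]; whisker [:: Mm] u [::];
                       whisker [:: Mm; Pp] capPM [::]; whisker [:: Mm; Pp] v [:: Mm];
                       whisker [:: Mm; Pp] cupPM [::]; whisker [::] cupMP [::]]
  (heq_sym (chain_exchange [:: Mm] [::] [::] (f := u) (g := capPM) hu erefl)).
rewrite_layers 2 3 [:: whisker [::] capMP [::]; whisker [:: Mm] u [::];
                       whisker [:: Mm; Pp] (cw_circle v) [::]; whisker [::] cupMP [::]]
  (heq_sym (chain_expand [:: Mm; Pp] [::] (layers_cw_circle hv) hcw)).
rewrite_layers 2 2 [:: whisker [::] capMP [::]; whisker [:: Mm] u [::]; whisker [::] cupMP [::];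
                       whisker [::] (cw_circle v) [::]]
  (heq_sym (chain_exchange [::] [::] [::] (f := cupMP) (g := cw_circle v) erefl hcw)).
apply: heq_sym; rewrite -[[:: _; _; _; _]]/([:: _; _; _] ++ [:: _]).
apply: chain_comp; first exact: layers_ccw_circle hu.
  by apply: heq_chain1; [apply: heq_sym; apply: whisker0 hcw | typecheck_layers].
by rewrite /ccw_circle; typecheck.
Qed.

(* The dot is a right curl. *)
Lemma ccw_circle_dot u : ty u = Some ([:: Pp], [:: Pp]) ->
  heq (ccw_circle (Comp (dot R) u)) (close_up (crossing (Id [:: Pp]) u)).
Proof.
move=> hu; have hd : ty (dot R) = Some ([:: Pp], [:: Pp]) by [].
have hc : ty (crossing (Id [:: Pp]) u) = Some ([:: Pp; Pp], [:: Pp; Pp]).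
  by rewrite /crossing; typecheck.
set L := [:: whisker [::] capMP [::]; whisker [:: Mm; Pp] capPM [::]; whisker [:: Mm] X [:: Mm];
             whisker [:: Mm; Pp] cupPM [::]; whisker [:: Mm] u [::]; whisker [::] cupMP [::]].
apply: (heq_trans (t := chain (Id [::]) L)).
  apply: heq_trans; first by apply: layers_ccw_circle; typecheck.
  rewrite_layers 1 1 [:: whisker [::] capMP [::]; whisker [:: Mm] (dot R) [::];
                         whisker [:: Mm] u [::]; whisker [::] cupMP [::]]
    (chain_split [:: Mm] [::] hd hu).
  rewrite_layers 1 1 L (chain_expand [:: Mm] [::] (layers_right_trace (t := X) erefl) hd).
  by apply: heq_refl; typecheck_layers.
apply: heq_sym; apply: heq_trans.
  by apply: layers_ccw_circle; rewrite /right_trace; typecheck.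
rewrite_layers 1 1 [:: whisker [::] capMP [::]; whisker [:: Mm; Pp] capPM [::];
                       whisker [:: Mm] (crossing (Id [:: Pp]) u) [:: Mm];
                       whisker [:: Mm; Pp] cupPM [::]; whisker [::] cupMP [::]]
  (chain_expand [:: Mm] [::] (layers_right_trace hc) (ltac:(rewrite /right_trace; typecheck))).
rewrite_layers 2 1 [:: whisker [::] capMP [::]; whisker [:: Mm; Pp] capPM [::];
                       whisker [:: Mm; Pp] (Id [:: Pp]) [:: Mm]; whisker [:: Mm] X [:: Mm];
                       whisker [:: Mm] u [:: Pp; Mm]; whisker [:: Mm; Pp] cupPM [::];
                       whisker [::] cupMP [::]]
  (chain_expand [:: Mm] [:: Mm] (layers_crossing (u := Id [:: Pp]) erefl hu) hc).
rewrite_layers 2 1 [:: whisker [::] capMP [::]; whisker [:: Mm; Pp] capPM [::];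
                       whisker [:: Mm] X [:: Mm]; whisker [:: Mm] u [:: Pp; Mm];
                       whisker [:: Mm; Pp] cupPM [::]; whisker [::] cupMP [::]]
  (chain_drop_Id [:: Mm; Pp] [:: Pp] [:: Mm]).
rewrite_layers 3 2 L (chain_exchange [:: Mm] [::] [::] (f := u) (g := cupPM) hu erefl).
by apply: heq_refl; typecheck_layers.
Qed.

Lemma ty_dotpow k : ty (dotpow R k) = Some ([:: Pp], [:: Pp]).
Proof. by elim: k => [|k IH] //=; rewrite IH. Qed.

Lemma dotpow_dot j : heq (Comp (dotpow R j) (dot R)) (dotpow R j.+1).
Proof.
have hd : ty (dot R) = Some ([:: Pp], [:: Pp]) by [].
elim: j => [|j IH] /=.
  by apply: heq_trans (heq_idl hd) _; apply: heq_sym; exact: heq_idr hd.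
have hj := ty_dotpow j.
apply: heq_trans; first by apply: heq_compA; typecheck.
by apply: heq_comp IH; apply: heq_refl; typecheck.
Qed.

Lemma crossing_dot_slide u v : ty u = Some ([:: Pp], [:: Pp]) -> ty v = Some ([:: Pp], [:: Pp]) ->
  heq (crossing u (Comp (dot R) v)) (Add (crossing (Comp u (dot R)) v) (Tens v u)).
Proof.
move=> hu hv; have hd : ty (dot R) = Some ([:: Pp], [:: Pp]) by [].
have hp : ty (Id [:: Pp]) = Some ([:: Pp], [:: Pp]) by [].
set U := Tens (Id [:: Pp]) u; set D := Tens (dot R) (Id [:: Pp]); set V := Tens v (Id [:: Pp]).
have hV : ty V = Some ([:: Pp; Pp], [:: Pp; Pp]) by rewrite /V; typecheck.
have splitD : heq (Tens (Comp (dot R) v) (Id [:: Pp])) (Comp D V).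
  apply: heq_sym; apply: heq_trans; first exact: (heq_interchange (t := Id [:: Pp]) hd hv hp hp).
  by apply: heq_tens; [apply: heq_refl; typecheck | exact: heq_idl hp].
rewrite /crossing -/U; apply: heq_trans.
  apply: heq_comp; first by apply: heq_refl; typecheck.
  by apply: heq_comp; [apply: heq_refl | exact: splitD].
apply: heq_trans.
  by apply: heq_comp; [apply: heq_refl; typecheck | apply: heq_sym; apply: heq_compA; typecheck].
apply: heq_trans.
  apply: heq_comp; first by apply: heq_refl; typecheck.
  by apply: heq_comp; [exact: dot_slide | apply: heq_refl; rewrite hV].
apply: heq_trans.
  by apply: heq_comp; [apply: heq_refl; typecheck | by_axiom ax_compDl].
apply: heq_trans; first by_axiom ax_compDr.
apply: heq_add.
- apply: heq_trans.
    by apply: heq_comp; [apply: heq_refl; typecheck | apply: heq_compA; typecheck].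
  apply: heq_trans; first by apply: heq_sym; apply: heq_compA; typecheck.
  apply: heq_comp; last by apply: heq_refl; typecheck.
  apply: heq_trans; first exact: (heq_interchange (s := Id [:: Pp]) hp hp hu hd).
  by apply: heq_tens; [exact: heq_idl hp | apply: heq_refl; typecheck].
- apply: heq_trans; first by apply: heq_comp; [apply: heq_refl; typecheck | exact: heq_idl hV].
  apply: heq_trans; first exact: (heq_interchange (s := Id [:: Pp]) hp hv hu hp).
  by apply: heq_tens; [exact: heq_idl hv | exact: heq_idr hu].
Qed.

Lemma close_up_cong t t' : heq t t' -> heq (close_up t) (close_up t').
Proof.
have side s s' w w' : ty w <> None -> ty w' <> None -> heq s s' ->
    heq (Comp w (Comp s w')) (Comp w (Comp s' w')).
  by move=> hw hw' h; apply: heq_comp; [exact: heq_refl | apply: heq_comp h _; exact: heq_refl].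
move=> h; apply: (side) => //; apply: heq_tens; first exact: heq_id.
by apply: side => //; apply: heq_tens h _; exact: heq_id.
Qed.

Lemma close_up_add s t :
  ty s = Some ([:: Pp; Pp], [:: Pp; Pp]) -> ty t = Some ([:: Pp; Pp], [:: Pp; Pp]) ->
  heq (close_up (Add s t)) (Add (close_up s) (close_up t)).
Proof.
move=> hs ht.
have htr : heq (right_trace (Add s t)) (Add (right_trace s) (right_trace t)).
  apply: heq_trans.
    apply: heq_comp; first by apply: heq_refl; typecheck.
    by apply: heq_comp; [by_axiom ax_tensDl | apply: heq_refl; typecheck].
  apply: heq_trans; first by apply: heq_comp; [apply: heq_refl; typecheck | by_axiom ax_compDl].
  by_axiom ax_compDr.
apply: heq_trans.
  apply: heq_comp; first by apply: heq_refl.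
  apply: heq_comp; last by apply: heq_refl.
  by apply: heq_tens htr; exact: heq_id.
apply: heq_trans.
  apply: heq_comp; first by apply: heq_refl.
  by apply: heq_comp; [by_axiom ax_tensDr | apply: heq_refl].
apply: heq_trans; first by apply: heq_comp; [apply: heq_refl | by_axiom ax_compDl].
by_axiom ax_compDr.
Qed.

Lemma close_up_dotted_succ j k :
  heq (close_up (crossing (dotpow R j) (dotpow R k.+1)))
      (Add (Comp (ct_ R k) (c_ R j)) (close_up (crossing (dotpow R j.+1) (dotpow R k)))).
Proof.
have hj := ty_dotpow j; have hk := ty_dotpow k.
apply: heq_trans; first exact: close_up_cong (crossing_dot_slide hj hk).
apply: heq_trans; first by apply: close_up_add; rewrite /crossing; typecheck.
apply: heq_trans.
  apply: heq_add; last exact: close_up_tens hk hj.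
  apply: close_up_cong; apply: heq_comp; last by apply: heq_refl; typecheck.
  by apply: heq_tens (dotpow_dot j); exact: heq_id.
by apply: heq_ax; [exact: ax_addC | ..];
  rewrite /close_up /ccw_circle /cw_circle /right_trace; typecheck.
Qed.

Lemma ty_sum1 (F : nat -> term R) (s : seq nat) : (forall a, ty (F a) = Some ([::], [::])) ->
  ty (sum1 (map F s)) = Some ([::], [::]).
Proof. by move=> hF; elim: s => [|a s IH] //=; rewrite hF IH eqxx. Qed.

Lemma sum1_rcons (F : nat -> term R) (s : seq nat) t : (forall a, ty (F a) = Some ([::], [::])) ->
  ty t = Some ([::], [::]) ->
  heq (sum1 (rcons (map F s) t)) (Add t (sum1 (map F s))).
Proof.
move=> hF ht; elim: s => [|a s IH] /=; first by apply: heq_refl; rewrite /= ht.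
have hs := ty_sum1 s hF; have ha := hF a.
apply: heq_trans; first by apply: heq_add IH; apply: heq_refl; rewrite ha.
apply: heq_trans; first by apply: heq_sym; by_axiom ax_addA.
apply: heq_trans; first by apply: heq_add; [by_axiom ax_addC | apply: heq_refl; typecheck].
by_axiom ax_addA.
Qed.

Lemma close_up_dotted_crossing k j :
  heq (close_up (crossing (dotpow R j) (dotpow R k)))
      (sum1 [seq Comp (ct_ R a) (c_ R (j + k.-1 - a)) | a <- iota 0 k]).
Proof.
elim: k j => [|k IH] j; first exact: close_up_crossing_Id (ty_dotpow j).
have ty_term a b : ty (Comp (ct_ R a) (c_ R b)) = Some ([::], [::]).
  by have ha := ty_dotpow a; have hb := ty_dotpow b; rewrite /ct_ /c_; typecheck.
apply: heq_trans; first exact: close_up_dotted_succ.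
have -> : iota 0 k.+1 = rcons (iota 0 k) k by rewrite -addn1 iotaD cats1.
rewrite map_rcons /= addnK.
apply: heq_trans _ (heq_sym (sum1_rcons _ (fun a => ty_term a _) (ty_term k j))).
apply: heq_add; first by apply: heq_refl; rewrite ty_term.
have -> : [seq Comp (ct_ R a) (c_ R (j + k - a)) | a <- iota 0 k] =
          [seq Comp (ct_ R a) (c_ R (j.+1 + k.-1 - a)) | a <- iota 0 k].
  by apply/eq_in_map => a; rewrite mem_iota => /andP [_ ha]; congr (Comp _ (c_ R _)); lia.
exact: (IH j.+1).
Qed.

End Presentation.

Theorem proposition2 (R : comPzRingType) (k : nat) : (1 <= k)%N ->
  heq (ct_ R k.+1)
      (sum1 [seq Comp (ct_ R a) (c_ R (k.-1 - a)) | a <- iota 0 k]).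
Proof.
move=> _; apply: heq_trans (ccw_circle_dot (ty_dotpow R k)) _.
by have := close_up_dotted_crossing R k 0; under eq_map => a do rewrite add0n.
Qed.
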